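(* For every integer $n\geq 5$, $AR(n,C_3\cup P_2)=\max\{n+1,\,7\}$, where $C_3\cup P_2$ is the vertex-disjoint union of a triangle and a single edge. *)

From mathcomp Require Import all_boot.
Set Implicit Arguments. Unset Strict Implicit. Unset Printing Implicit Defensive.

(* An edge-colouring of the complete graph K_n (vertex set 'I_n) using exactly
   k colours: c u v is the colour of the edge uv (only u != v is meaningful),
   c is symmetric, and every colour of 'I_k is used on some edge. *)
Definition edge_coloring (n k : nat) (c : 'I_n -> 'I_n -> 'I_k) : Prop :=
  (forall u v, c u v = c v u) /\
  (forall i : 'I_k, exists u v : 'I_n, u != v /\ c u v = i).

Definition has_rainbow_C3P2 (n k : nat) (c : 'I_n -> 'I_n -> 'I_k) : Prop :=
  exists a b x d e : 'I_n,
    uniq [:: a; b; x; d; e] /\ uniq [:: c a b; c b x; c x a; c d e].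

(* AR(n, C_3 \cup P_2) = m  iff  m - 1 is the maximum number of colours in an
   edge-colouring of K_n with no rainbow C_3 \cup P_2 (so m is the least number
   of colours forcing a rainbow copy). *)
Definition AR_C3P2_is (n m : nat) : Prop :=
  (exists k (c : 'I_n -> 'I_n -> 'I_k),
      k.+1 = m /\ edge_coloring c /\ ~ has_rainbow_C3P2 c) /\
  (forall k (c : 'I_n -> 'I_n -> 'I_k),
      edge_coloring c -> ~ has_rainbow_C3P2 c -> k.+1 <= m).

From mathcomp Require Import all_boot zify.
Set Implicit Arguments. Unset Strict Implicit. Unset Printing Implicit Defensive.

(* Lower bound: for n >= 6 the star colouring of K_n (the edge ou gets the
   colour u for a fixed centre o, every other edge the colour o) uses n
   colours, and for n = 5 an explicit 6-colouring of K_5 is checked by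
   computation; neither contains a rainbow C_3 ∪ P_2.

   Upper bound: writing cols S for the colours inside a vertex set S, a
   colouring without rainbow copy satisfies |cols S| <= max(|S|, 6) for
   |S| >= 5, by induction on |S|.  If some vertex v carries at most one
   private colour (a colour of S absent from S \ v) we delete v; otherwise
   every vertex has two private colours and a rainbow copy is built by hand
   (rainbow_of_private_pairs).  The base cases |S| = 5 and |S| = 6 are
   settled by an exhaustive search over colourings of K_5 and K_6, taken up
   to renaming of colours, whose soundness is proved first. *)

Section Copies.
Variable m : nat.

(* The edges of K_m, as pairs i < j < m in lexicographic order; edges are
   referred to by their position in this list. *)
Definition edges := [seq (i, j) | i <- iota 0 m, j <- iota i.+1 (m - i.+1)].
Definition edge_id i j := index (minn i j, maxn i j) edges.

Definition copy_edges (t : seq nat) :=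
  [:: edge_id (nth 0 t 0) (nth 0 t 1); edge_id (nth 0 t 1) (nth 0 t 2);
      edge_id (nth 0 t 2) (nth 0 t 0); edge_id (nth 0 t 3) (nth 0 t 4)].

Fixpoint tuples l :=
  if l is l'.+1 then [seq x :: t | x <- iota 0 m, t <- tuples l'] else [:: [::]].

Definition copies := undup [seq sort leq (copy_edges t) | t <- tuples 5 & uniq t].

Definition last_edge (cf : seq nat) := foldr maxn 0 cf.

(* Entry p lists the copies whose last edge is p: they are checked as soon as
   edge p has been coloured. *)
Definition copies_by_last :=
  [seq [seq cf <- copies | last_edge cf == p] | p <- iota 0 (size edges)].

Lemma mem_edges i j : i < j < m -> (i, j) \in edges.
Proof.
move=> /andP [hij hjm].
apply: (@allpairs_f_dep _ (fun _ => nat) _ pair); rewrite !mem_iota /=; lia.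
Qed.

Lemma mem_edge_id i j : i < m -> j < m -> i != j -> (minn i j, maxn i j) \in edges.
Proof. by move=> hi hj hij; apply: mem_edges; move: hij; rewrite neq_ltn; lia. Qed.

Lemma edges_lt e : e \in edges -> e.1 < e.2 < m.
Proof.
case/allpairsPdep => i [j [hi hj ->]]; move: hi hj; rewrite !mem_iota /=; lia.
Qed.

Lemma mem_tuples l t : t \in tuples l -> size t = l /\ all (fun x => x < m) t.
Proof.
elim: l t => [|l IH] t /=; first by rewrite inE => /eqP ->.
case/allpairsP => -[x t'] [/= hx ht' ->]; have [hs ha] := IH _ ht'.
by rewrite /= hs ha andbT; move: hx; rewrite mem_iota.
Qed.

Lemma last_edge_max cf p : p \in cf -> p <= last_edge cf.
Proof. by elim: cf => //= q cf IH; rewrite inE => /orP [/eqP ->|/IH]; lia. Qed.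
End Copies.

(* Colourings are enumerated up to renaming of
   the colours: the label of edge i is i if its colour is new, and otherwise
   the first edge of its colour (so labels are "roots").  The search extends a
   label prefix p, where roots lists the labels used so far, and prunes as soon
   as a copy becomes rainbow, a forbidden label 0 appears (forb i means edge i
   must not share the colour of edge 0), or K colours can no longer be reached. *)
Section Search.
Variables (K : nat) (tab : seq (seq (seq nat))) (forb : seq bool).

Definition last_ok (p : seq nat) :=
  all (fun cf => ~~ uniq [seq nth 0 p i | i <- cf]) (nth [::] tab (size p).-1).

(* A short-circuiting has, so that evaluation in the virtual machine stops at
   the first successful branch. *)
Fixpoint lazy_has (f : nat -> bool) (s : seq nat) :=
  if s is x :: s' then if f x then true else lazy_has f s' else false.

Lemma lazy_hasE f s : lazy_has f s = has f s.
Proof. by elim: s => //= x s ->; case: (f x). Qed.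

Fixpoint search (fuel : nat) (p roots : seq nat) : bool :=
  match fuel with
  | 0 => K <= size roots
  | f.+1 =>
    if K <= size roots + fuel then
      lazy_has (fun l =>
        if (l == 0) && nth false forb (size p) then false else
        if last_ok (rcons p l) then
          search f (rcons p l) (if l == size p then l :: roots else roots)
        else false) (size p :: roots)
    else false
  end.

Lemma searchS f p r : search f.+1 p r =
  (K <= size r + f.+1) &&
  has (fun l => [&& ~~ ((l == 0) && nth false forb (size p)), last_ok (rcons p l) &
                  search f (rcons p l) (if l == size p then l :: r else r)])
      (size p :: r).
Proof.
cbn [search]; rewrite lazy_hasE; case: (K <= _) => //; apply: eq_has => l.
by case: (_ && _); case: (last_ok _).
Qed.
End Search.

Section SearchComplete.
Variables (m K : nat) (L : seq nat) (forb : seq bool).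
Let N := size (edges m).
Hypothesis L_size : size L = N.
Hypothesis L_roots : forall i, i < N ->
  nth 0 L i = i \/ (nth 0 L i < i /\ nth 0 L (nth 0 L i) = nth 0 L i).
Hypothesis L_no_rainbow : forall cf, cf \in copies m -> last_edge cf < N ->
  ~~ uniq [seq nth 0 L i | i <- cf].
Hypothesis L_many : K <= size (undup L).
Hypothesis L_forb : forall i, i < N -> nth false forb i -> nth 0 L i != 0.

Fixpoint roots_upto i :=
  if i is i'.+1 then (if nth 0 L i' == i' then i' :: roots_upto i' else roots_upto i')
  else [::].

Lemma mem_roots_upto i x : (x \in roots_upto i) = (x < i) && (nth 0 L x == x).
Proof.
elim: i => [|i IH] /=; first by rewrite in_nil.
have lt_neq y : y != i -> (y < i.+1) = (y < i) by move=> hy; rewrite ltnS leq_eqVlt (negbTE hy).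
case h: (nth 0 L i == i); rewrite ?inE IH;
  case: (eqVneq x i) => [->|hxi] /=; rewrite ?ltnSn ?ltnn ?h ?lt_neq //.
Qed.

Lemma size_roots_upto i d : size (roots_upto (i + d)) <= size (roots_upto i) + d.
Proof. by elim: d => [|d IH]; rewrite ?addn0 // addnS /=; case: ifP => _ /=; lia. Qed.

Lemma undup_roots : size (undup L) <= size (roots_upto N).
Proof.
apply: uniq_leq_size; first exact: undup_uniq.
move=> x; rewrite mem_undup => /(nthP 0) [j hj <-]; rewrite L_size in hj.
rewrite mem_roots_upto; case: (L_roots hj) => [e|[h1 ->]]; first by rewrite e hj e eqxx.
by rewrite eqxx andbT (ltn_trans h1 hj).
Qed.

Lemma last_ok_prefix i : i < N -> last_ok (copies_by_last m) (take i.+1 L).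
Proof.
move=> hi; rewrite /last_ok size_takel ?L_size //= /copies_by_last.
rewrite (nth_map 0) ?size_iota // nth_iota // add0n.
apply/allP => cf; rewrite mem_filter => /andP [/eqP hlast hcf].
rewrite (eq_in_map _ (nth 0 L) cf).1 ?L_no_rainbow ?hlast // => j hj.
by rewrite nth_take //; have := last_edge_max hj; lia.
Qed.

Lemma search_prefix d i : i + d = N ->
  search K (copies_by_last m) forb d (take i L) (roots_upto i).
Proof.
elim: d i => [|d IH] i hid.
  by move: hid; rewrite addn0 => ->; exact: leq_trans L_many undup_roots.
have hi : i < N by lia.
rewrite searchS; apply/andP; split.
  by apply: leq_trans L_many _; apply: leq_trans undup_roots _; rewrite -hid size_roots_upto.
apply/hasP; exists (nth 0 L i).
  rewrite inE size_take L_size hi mem_roots_upto.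
  by case: (L_roots hi) => [->|[h1 h2]]; rewrite ?eqxx // h1 h2 eqxx orbT.
rewrite size_take L_size hi -take_nth ?L_size // last_ok_prefix //.
have -> : ~~ ((nth 0 L i == 0) && nth false forb i).
  by case hf: (nth false forb i); rewrite ?andbF ?andbT // L_forb.
have -> : (if nth 0 L i == i then nth 0 L i :: roots_upto i else roots_upto i) =
    roots_upto i.+1 by rewrite /=; case: eqP => // ->.
by apply: IH; lia.
Qed.

Lemma search_complete : search K (copies_by_last m) forb N [::] [::].
Proof. by have := search_prefix (add0n N); rewrite take0. Qed.
End SearchComplete.

(* Any colour list Lc of the edges of K_m (over an arbitrary type) with no
   rainbow copy and respecting forb has at most 6 colours when the search for
   7 colours fails: relabelling each colour by its first occurrence puts Lc in
   root form. *)
Lemma search_bound m (T : eqType) (x0 : T) (Lc : seq T) (forb : seq bool) :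
  size Lc = size (edges m) ->
  (forall cf, cf \in copies m -> ~~ uniq [seq nth x0 Lc i | i <- cf]) ->
  (forall i, i < size (edges m) -> nth false forb i -> nth x0 Lc i != nth x0 Lc 0) ->
  search 7 (copies_by_last m) forb (size (edges m)) [::] [::] = false ->
  size (undup Lc) <= 6.
Proof.
move=> hsize hnr hforb hsearch; rewrite leqNgt; apply/negP => hK.
pose L := [seq index x Lc | x <- Lc].
have inj : {in Lc &, injective (index^~ Lc)} by exact: index_inj.
have hL i : i < size Lc -> nth 0 L i = index (nth x0 Lc i) Lc.
  by move=> hi; rewrite (nth_map x0).
have index_lt i : i < size Lc -> index (nth x0 Lc i) Lc < size Lc.
  by move=> hi; rewrite index_mem mem_nth.
case/negP: (negbT hsearch); apply: (@search_complete m 7 L forb).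
- by rewrite size_map.
- move=> i hi; rewrite -hsize in hi; rewrite hL //.
  have hle := index_nth x0 hi.
  case: (ltngtP (index (nth x0 Lc i) Lc) i) => [hlt|hgt|->]; [right|lia|by left].
  by rewrite hL ?index_lt // nth_index ?mem_nth.
- move=> cf hcf hlast; apply: contra (hnr _ hcf).
  have hall : all (fun i => i < size Lc) cf.
    by apply/allP => j /last_edge_max; rewrite hsize; lia.
  rewrite (eq_in_map _ (fun i => index (nth x0 Lc i) Lc) cf).1 => [|i /(allP hall)];
    last exact: hL.
  rewrite (map_comp (index^~ Lc)) map_inj_in_uniq // => x y /mapP [a ha ->] /mapP [b hb ->].
  by apply: inj; apply: mem_nth; exact: (allP hall).
- apply: leq_trans hK _; rewrite -(size_map (index^~ Lc)); apply: uniq_leq_size.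
    by rewrite map_inj_in_uniq ?undup_uniq // => x y; rewrite !mem_undup; exact: inj.
  by move=> y /mapP [x hx ->]; rewrite mem_undup; apply: map_f; rewrite -mem_undup.
- move=> i hi hf; have := hforb i hi hf; rewrite -hsize in hi; rewrite hL //.
  by case: (Lc) hi => [|h t] //= _; rewrite eq_sym; case: ifP.
Qed.

Lemma no_rich_K5 : search 7 (copies_by_last 5) [::] (size (edges 5)) [::] [::] = false.
Proof. vm_cast_no_check (erefl false). Qed.

Definition avoid0 := [seq e.1 != 0 | e <- edges 6].

(* K_6 has no colouring with at least 7 colours and no rainbow copy in which
   the colour of the edge 01 only appears at vertex 0. *)
Lemma no_rich_K6 : search 7 (copies_by_last 6) avoid0 (size (edges 6)) [::] [::] = false.
Proof. vm_cast_no_check (erefl false). Qed.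

Ltac by_neq := solve [ done | rewrite eq_sym; done ].

Lemma uniq5 (T : eqType) (a b x d e : T) :
  a != b -> a != x -> a != d -> a != e -> b != x -> b != d -> b != e ->
  x != d -> x != e -> d != e -> uniq [:: a; b; x; d; e].
Proof. by move=> *; rewrite /= !inE !negb_or; repeat (apply/andP; split); by_neq. Qed.

Section ColourCounting.
Variables (n k : nat) (c : 'I_n -> 'I_n -> 'I_k).
Hypothesis c_sym : forall u v, c u v = c v u.
Implicit Types (S A B : {set 'I_n}) (u v : 'I_n).

Definition cols (S : {set 'I_n}) : {set 'I_k} :=
  [set i | [exists u, exists v, [&& u \in S, v \in S, u != v & c u v == i]]].

Lemma colsP S i :
  reflect (exists u v, [/\ u \in S, v \in S, u != v & c u v = i]) (i \in cols S).
Proof.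
rewrite inE; apply: (iffP existsP) => [[u /existsP [v /and4P [hu hv huv /eqP e]]]|].
  by exists u, v.
by case=> u [v [hu hv huv e]]; exists u; apply/existsP; exists v; rewrite hu hv huv e eqxx.
Qed.

Lemma mem_cols S u v : u \in S -> v \in S -> u != v -> c u v \in cols S.
Proof. by move=> hu hv huv; apply/colsP; exists u, v. Qed.

Lemma cols_subset A B : A \subset B -> cols A \subset cols B.
Proof.
move=> /subsetP sAB; apply/subsetP => i /colsP [u [v [hu hv huv <-]]].
exact: mem_cols (sAB u hu) (sAB v hv) huv.
Qed.

Definition private_to (S : {set 'I_n}) a col := col \notin cols (S :\ a).

Definition private_cols S v := cols S :\: cols (S :\ v).

Lemma card_cols_delete S v : #|cols S| = #|cols (S :\ v)| + #|private_cols S v|.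
Proof.
have sub : cols (S :\ v) \subset cols S by apply/cols_subset/subD1set.
rewrite /private_cols cardsD (setIidPr sub); have := subset_leq_card sub; lia.
Qed.

Lemma private_neq S a col u u' : private_to S a col -> u \in S -> u' \in S ->
  u != a -> u' != a -> u != u' -> c u u' != col.
Proof.
move=> hp hu hu' hua hu'a huu'; apply: contraNneq hp => <-.
by apply: mem_cols; rewrite // in_setD1 ?hua ?hu'a.
Qed.

Lemma private_colsP S v col : col \in private_cols S v ->
  exists z, [/\ z \in S, z != v, c v z = col & private_to S v col].
Proof.
case/setDP => /colsP [u [u' [hu hu' huu' e]]] hp.
have [huv|huv] := eqVneq u v; first by subst u; exists u'; split; rewrite // eq_sym.
have [hu'v|hu'v] := eqVneq u' v; first by subst u'; exists u; split; rewrite // c_sym.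
by case/negP: hp; rewrite -e; apply: mem_cols; rewrite // in_setD1 ?huv ?hu'v.
Qed.

Lemma two_private S v : 1 < #|private_cols S v| ->
  exists x y, [/\ x \in S, y \in S, x != v, y != v &
     [/\ c v x != c v y, private_to S v (c v x) & private_to S v (c v y)]].
Proof.
case/card_gt1P => i [j [hi hj hij]].
have [x [hx hxv ex px]] := private_colsP hi.
have [y [hy hyv ey py]] := private_colsP hj.
by exists x, y; rewrite ex ey.
Qed.

Lemma rainbowI a b x d e : uniq [:: a; b; x; d; e] ->
  c a b != c b x -> c a b != c x a -> c a b != c d e ->
  c b x != c x a -> c b x != c d e -> c x a != c d e -> has_rainbow_C3P2 c.
Proof.
move=> hu *; exists a, b, x, d, e; split => //.
by rewrite /= !inE !negb_or; repeat (apply/andP; split); by_neq.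
Qed.

Lemma rainbow_private_cherry S w z1 z2 d e : uniq [:: w; z1; z2; d; e] ->
  [/\ w \in S, z1 \in S, z2 \in S, d \in S & e \in S] ->
  private_to S w (c w z1) -> private_to S w (c w z2) -> c w z1 != c w z2 ->
  c d e != c z1 z2 -> has_rainbow_C3P2 c.
Proof.
move=> hu [hw h1 h2 hd he] p1 p2 p12 hde.
move: (hu); rewrite /= !inE !negb_or => /and5P [/and4P [? ? ? ?] /and3P [? ? ?] /andP [? ?] ? _].
apply: (rainbowI hu); rewrite 1?[c z2 w]c_sym //.
- by rewrite eq_sym; apply: (private_neq p1); by_neq.
- by rewrite eq_sym; apply: (private_neq p1); by_neq.
- by apply: (private_neq p2); by_neq.
- by rewrite eq_sym.
- by rewrite eq_sym; apply: (private_neq p2); by_neq.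
Qed.

Lemma rainbow_common_private_nbr S w z w' v t : uniq [:: w; z; w'; v; t] ->
  [/\ w \in S, z \in S, w' \in S, v \in S & t \in S] ->
  private_to S w (c w z) -> private_to S w' (c w' z) -> private_to S v (c v t) ->
  c w w' \in cols (S :\ w) -> c w w' \in cols (S :\ w') -> has_rainbow_C3P2 c.
Proof.
move=> hu [hw hz hw' hv ht] p1 p2 p3 g1 g2.
move: (hu); rewrite /= !inE !negb_or => /and5P [/and4P [? ? ? ?] /and3P [? ? ?] /andP [? ?] ? _].
have ne_priv a col col' : private_to S a col -> col' \in cols (S :\ a) -> col' != col.
  by move=> hp h; apply: contraNneq hp => <-.
apply: (rainbowI hu); rewrite 1?[c z w']c_sym 1?[c w' w]c_sym.
- by apply: (private_neq p2); by_neq.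
- by rewrite eq_sym; apply: ne_priv p1 g1.
- by apply: (private_neq p3); by_neq.
- by rewrite eq_sym; apply: ne_priv p2 g2.
- by rewrite -c_sym; apply: (private_neq p3); by_neq.
- by apply: (private_neq p3); by_neq.
Qed.

Definition mono_outside S v x y :=
  {in S &, forall d e, d \notin [:: v; x; y] -> e \notin [:: v; x; y] -> d != e ->
     c d e = c x y}.

(* In that configuration a vertex outside T has its private edges into T, as
   the colour of xy is seen away from it. *)
Lemma private_nbr_inside S v x y u z : mono_outside S v x y ->
  x \in S -> y \in S -> x != y -> u \in S -> u \notin [:: v; x; y] ->
  z \in S -> z != u -> private_to S u (c u z) -> z \in [:: v; x; y].
Proof.
move=> mono hx hy hxy hu huT hz hzu hp; apply/negPn/negP => hzT.
have hxu : x != u by apply: (memPn huT); rewrite !inE eqxx orbT.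
have hyu : y != u by apply: (memPn huT); rewrite !inE eqxx !orbT.
by have := private_neq hp hx hy hxu hyu hxy; rewrite -(mono u z) ?eqxx // eq_sym.
Qed.

(* Two vertices w, w' outside T sharing a private neighbour z in {x, y}: the
   triangle w z w', whose edge ww' has the colour of xy, and the private edge
   from v to the other vertex of {x, y} form a rainbow copy. *)
Lemma rainbow_shared_private_nbr S v x y w w' z : mono_outside S v x y ->
  [/\ v \in S, x \in S, y \in S, w \in S & w' \in S] -> uniq [:: v; x; y; w; w'] ->
  private_to S v (c v x) -> private_to S v (c v y) -> z \in [:: x; y] ->
  private_to S w (c w z) -> private_to S w' (c w' z) -> has_rainbow_C3P2 c.
Proof.
move=> mono [hv hx hy hw hw'] hu pvx pvy hz pz pz'.
move: (hu); rewrite /= !inE !negb_or.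
move=> /and5P [/and4P [hvx hvy hvw hvw'] /and3P [hxy hxw hxw'] /andP [hyw hyw'] hww' _].
have cww' : c w w' = c x y by rewrite mono // !inE !negb_or; apply/and3P; split; by_neq.
have seen u : u \in [:: w; w'] -> c w w' \in cols (S :\ u).
  move=> hu'; rewrite cww'; apply: mem_cols; rewrite ?in_setD1 ?hx ?hy ?andbT //;
    by move: hu'; rewrite !inE => /orP [] /eqP ->.
move: hz; rewrite !inE => /orP [] /eqP hz; subst z.
- apply: (@rainbow_common_private_nbr S w x w' v y); rewrite ?seen ?inE ?eqxx ?orbT //.
  by apply: uniq5; by_neq.
- apply: (@rainbow_common_private_nbr S w y w' v x); rewrite ?seen ?inE ?eqxx ?orbT //.
  by apply: uniq5; by_neq.
Qed.

(* In that configuration, with v having private edges to x and y, two further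
   vertices w, w' with two private colours each yield a rainbow copy: their
   private neighbours lie in T, so either some private neighbour of w' is not
   one of w, giving a cherry at w, or w and w' share their two private
   neighbours, one of which lies in {x, y}. *)
Lemma rainbow_mono_outside S v x y w w' : mono_outside S v x y ->
  [/\ v \in S, x \in S, y \in S, w \in S & w' \in S] -> uniq [:: v; x; y; w; w'] ->
  private_to S v (c v x) -> private_to S v (c v y) ->
  1 < #|private_cols S w| -> 1 < #|private_cols S w'| -> has_rainbow_C3P2 c.
Proof.
set T := [:: v; x; y] => mono hS hu pvx pvy hpw hpw'; have [hv hx hy hw hw'] := hS.
move: (hu); rewrite /= !inE !negb_or.
move=> /and5P [/and4P [hvx hvy hvw hvw'] /and3P [hxy hxw hxw'] /andP [hyw hyw'] hww' _].
have hwT : w \notin T by rewrite !inE !negb_or; apply/and3P; split; by_neq.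
have hw'T : w' \notin T by rewrite !inE !negb_or; apply/and3P; split; by_neq.
have nbrT := private_nbr_inside mono hx hy hxy.
have [z1 [z2 [hz1 hz2 hz1w hz2w [c12 p1 p2]]]] := two_private hpw.
have [z1' [z2' [hz1' hz2' hz1w' hz2w' [c12' p1' p2']]]] := two_private hpw'.
have z1T := nbrT _ _ hw hwT hz1 hz1w p1.
have z2T := nbrT _ _ hw hwT hz2 hz2w p2.
have hz12 : z1 != z2 by apply: contraNneq c12 => ->.
have cherry z3 : z3 \in S -> z3 != w' -> z3 \notin [:: z1; z2] ->
    private_to S w' (c w' z3) -> has_rainbow_C3P2 c.
  move=> hz3 hz3w'; rewrite !inE negb_or => /andP [h31 h32] p3.
  have z3T := nbrT _ _ hw' hw'T hz3 hz3w' p3.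
  have := memPn hwT z3 z3T; have := memPn hw'T z1 z1T; have := memPn hw'T z2 z2T.
  move=> hz1w'' hz2w'' hz3w.
  apply: (@rainbow_private_cherry S w z1 z2 w' z3) => //.
    by apply: uniq5; by_neq.
  by rewrite eq_sym; apply: (private_neq p3).
case: (boolP (z1' \in [:: z1; z2])) => [i1|i1]; last exact: (cherry z1').
case: (boolP (z2' \in [:: z1; z2])) => [i2|i2]; last exact: (cherry z2').
have [q1 q2] : private_to S w' (c w' z1) /\ private_to S w' (c w' z2).
  by move: i1 i2 c12' p1' p2'; rewrite !inE => /orP [] /eqP -> /orP [] /eqP ->;
    rewrite ?eqxx.
have shared := rainbow_shared_private_nbr mono hS hu pvx pvy.
have [ev|hz1v] := eqVneq z1 v.
  by apply: (shared z2) => //; move: z2T; rewrite inE -ev eq_sym (negbTE hz12).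
by apply: (shared z1) => //; move: z1T; rewrite inE (negbTE hz1v).
Qed.

(* Take private edges vx, vy at some v;
   an edge avoiding v, x, y not coloured like xy completes a cherry at v, and
   otherwise rainbow_mono_outside applies to two further vertices. *)
Lemma rainbow_of_private_pairs S : 5 <= #|S| ->
  {in S, forall v, 1 < #|private_cols S v|} -> has_rainbow_C3P2 c.
Proof.
move=> hS hall.
have [v hv] : exists v, v \in S by apply/card_gt0P; apply: leq_trans hS.
have [x [y [hx hy hxv hyv [cxy pvx pvy]]]] := two_private (hall v hv).
have hxy : x != y by apply: contraNneq cxy => ->.
pose W := S :\ v :\ x :\ y.
have memW u : (u \in W) = (u \notin [:: v; x; y]) && (u \in S).
  by rewrite !in_setD1 !inE !negb_or -!andbA; do 2!bool_congr.
have hW : 1 < #|W|.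
  move: hS; rewrite (cardsD1 v S) (cardsD1 x (S :\ v)) (cardsD1 y (S :\ v :\ x)).
  by rewrite !in_setD1 hv hx hy hxv hyv eq_sym hxy /= !add1n !ltnS.
case: (boolP [exists d, exists e, [&& d \in W, e \in W, d != e & c d e != c x y]]).
  case/existsP => d /existsP [e /and4P [hd he hde hc]].
  move: hd he; rewrite !memW !inE !negb_or => /andP [/and3P [hdv hdx hdy] hdS].
  move=> /andP [/and3P [hev hex hey] heS].
  by apply: (@rainbow_private_cherry S v x y d e) => //; apply: uniq5; by_neq.
move=> /existsPn mono; have [w [w' [hw hw' hww']]] := card_gt1P hW.
move: (hw) (hw'); rewrite !memW !inE !negb_or.
move=> /andP [/and3P [hwv hwx hwy] hwS] /andP [/and3P [hw'v hw'x hw'y] hw'S].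
apply: (@rainbow_mono_outside S v x y w w'); rewrite ?hall //; last by apply: uniq5; by_neq.
move=> d e hd he hdT heT hde; apply/eqP.
by have /existsPn/(_ e) := mono d; rewrite !memW hd he hdT heT hde /= negbK.
Qed.

Hypothesis no_rainbow : ~ has_rainbow_C3P2 c.

Section Enumeration.
Variables (s : seq 'I_n) (v0 : 'I_n).
Hypothesis s_uniq : uniq s.
Let m := size s.

Definition pair_colour i j := c (nth v0 s i) (nth v0 s j).
Definition colour_list := [seq pair_colour e.1 e.2 | e <- edges m].

Lemma nth_colour_list i j : i < m -> j < m -> i != j ->
  nth (c v0 v0) colour_list (edge_id m i j) = pair_colour i j.
Proof.
move=> hi hj hij; have hE := mem_edge_id hi hj hij.
rewrite /edge_id (nth_map (0, 0)) ?index_mem // nth_index //= /minn /maxn /pair_colour.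
by case: ltnP => // _; rewrite c_sym.
Qed.

Lemma cols_le_colour_list S : S =i s -> #|cols S| <= size (undup colour_list).
Proof.
move=> hSs; apply: leq_trans (card_size (undup colour_list)); apply: subset_leq_card.
apply/subsetP => col /colsP [u [u' [hu hu' huu' <-]]].
move: hu hu'; rewrite !hSs mem_undup => hu hu'.
have hidx : index u s != index u' s by rewrite (inj_in_eq (@index_inj _ v0 s)).
rewrite -(nth_index v0 hu) -(nth_index v0 hu') -/(pair_colour _ _) -nth_colour_list ?index_mem //.
by apply: mem_nth; rewrite size_map /edge_id index_mem mem_edge_id ?index_mem.
Qed.

Lemma colour_list_no_rainbow cf : cf \in copies m ->
  ~~ uniq [seq nth (c v0 v0) colour_list i | i <- cf].
Proof.
rewrite /copies mem_undup => /mapP [t]; rewrite mem_filter => /andP [ut /mem_tuples [st hat]] ->.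
rewrite (perm_uniq (perm_map _ (permEl (perm_sort _ _)))).
case: t st ut hat => [|a [|b [|x [|d [|e [|? ?]]]]]] // _ ut hat.
have [hab hbx hxa hde] : [/\ a != b, b != x, x != a & d != e].
  move: ut; rewrite /= !inE !negb_or.
  by move=> /and5P [/and4P [] ? ? ? ? /and3P [] ? ? ? /andP [] ? ? ? _]; split; by_neq.
have /and5P [ha hb hx hd /andP [he _]] := hat.
rewrite [map _ _]/= !nth_colour_list //; apply/negP => rainbow; apply: no_rainbow.
exists (nth v0 s a), (nth v0 s b), (nth v0 s x), (nth v0 s d), (nth v0 s e); split => //.
rewrite (map_inj_in_uniq (f := nth v0 s) _ (s := [:: a; b; x; d; e])) // => i j hi hj /eqP.
by rewrite nth_uniq ?(allP hat) // => /eqP.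
Qed.
End Enumeration.

Lemma cols_le_search S (s : seq 'I_n) v0 forb : uniq s -> S =i s ->
  (forall i, i < size (edges (size s)) -> nth false forb i ->
     nth (c v0 v0) (colour_list s v0) i != nth (c v0 v0) (colour_list s v0) 0) ->
  search 7 (copies_by_last (size s)) forb (size (edges (size s))) [::] [::] = false ->
  #|cols S| <= 6.
Proof.
move=> us hSs hforb hsearch; apply: leq_trans (cols_le_colour_list v0 hSs) _.
apply: (search_bound _ _ hforb hsearch); first by rewrite size_map.
exact: colour_list_no_rainbow.
Qed.

Lemma cols_K5 S : #|S| = 5 -> #|cols S| <= 6.
Proof.
move=> hS; have [v0 _] : exists v0, v0 \in S by apply/card_gt0P; rewrite hS.
apply: (@cols_le_search S (enum S) v0 [::]) => [||i|]; rewrite ?enum_uniq //.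
- by move=> u; rewrite mem_enum.
- by rewrite nth_nil.
- by rewrite -cardE hS; exact: no_rich_K5.
Qed.

(* Six vertices carry at most six colours: otherwise, as five vertices carry
   at most six, some colour of S is private to a vertex v0, say on the edge
   v0 z, and the search on K_6 with 0 = v0 and 1 = z excludes this. *)
Lemma cols_K6 S : #|S| = 6 -> #|cols S| <= 6.
Proof.
move=> hS; rewrite leqNgt; apply/negP => many.
have [v0 hv0] : exists v0, v0 \in S by apply/card_gt0P; rewrite hS.
have hSv : #|S :\ v0| = 5 by move: hS; rewrite (cardsD1 v0) hv0 => -[].
have /card_gt0P [col hcol] : 0 < #|private_cols S v0|.
  by move: many; rewrite (card_cols_delete S v0); have := cols_K5 hSv; lia.
have [z [hz hzv0 ecol pcol]] := private_colsP hcol.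
pose s := v0 :: z :: enum (S :\ v0 :\ z).
have us : uniq s.
  by rewrite /= !inE !mem_enum !in_setD1 !eqxx enum_uniq /= andbF andbT orbF eq_sym.
have hSs : S =i s.
  move=> u; rewrite !inE mem_enum !in_setD1.
  case: (eqVneq u v0) => [->|_]; first by rewrite hv0.
  by case: (eqVneq u z) => [->|_]; rewrite ?hz.
have hs : size s = 6.
  by rewrite /= -cardE; move: hSv; rewrite (cardsD1 z) in_setD1 hzv0 hz add1n => -[->].
suff: #|cols S| <= 6 by rewrite leqNgt many.
apply: (@cols_le_search S s v0 avoid0 us hSs); last by rewrite hs; exact: no_rich_K6.
rewrite hs => i hi; rewrite /avoid0 (nth_map (0, 0)) // => ha.
rewrite /colour_list hs !(nth_map (0, 0)) //; have -> : nth (0, 0) (edges 6) 0 = (0, 1) by [].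
have /edges_lt := mem_nth (0, 0) hi; case: (nth _ _ i) ha => a b /= ha /andP [hab hb].
have ne0 j : 0 < j < 6 -> nth v0 s j != v0.
  by move=> /andP [hj0 hj6]; rewrite -[v0 in _ != v0]/(nth v0 s 0) nth_uniq ?hs -?lt0n.
rewrite /pair_colour /= ecol; apply: (private_neq pcol); rewrite ?hSs ?mem_nth ?hs ?ne0 //.
- lia.
- by rewrite lt0n ha /=; lia.
- lia.
- have hbs : b < size s by rewrite hs.
  by rewrite nth_uniq ?(ltn_eqF hab) ?(ltn_trans hab hbs).
Qed.

Lemma cols_bound m S : #|S| = m -> 5 <= m -> #|cols S| <= maxn m 6.
Proof.
elim: m S => [//|m IH] S hS hm.
have [m4|/eqP m4] := eqVneq m 4; first by subst m; exact: cols_K5.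
have [m5|/eqP m5] := eqVneq m 5; first by subst m; exact: cols_K6.
case: (boolP [exists v in S, #|private_cols S v| <= 1]) => [|/exists_inPn rich].
  case/exists_inP => v hv few.
  have hSv : #|S :\ v| = m by move: hS; rewrite (cardsD1 v) hv => -[].
  rewrite (card_cols_delete S v); apply: leq_trans (leq_add (IH _ hSv _) few) _; lia.
case: no_rainbow; apply: (@rainbow_of_private_pairs S); first by move: hm; rewrite -hS.
by move=> v /rich; rewrite -ltnNge.
Qed.
End ColourCounting.
Definition K5_table : seq (seq nat) :=
  [:: [:: 0; 0; 1; 0; 2]; [:: 0; 0; 3; 2; 0]; [:: 1; 3; 0; 4; 5];
      [:: 0; 2; 4; 0; 0]; [:: 2; 0; 5; 0; 0]].
Definition K5_tab (u v : nat) := nth 0 (nth [::] K5_table u) v.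
Definition K5_colour (u v : 'I_5) : 'I_6 := inord (K5_tab u v).

Lemma all_I5 (P : nat -> bool) : all P (iota 0 5) -> forall u : 'I_5, P u.
Proof. by move=> /allP hP u; apply: hP; rewrite mem_iota ltn_ord. Qed.

Lemma val_K5_colour u v : val (K5_colour u v) = K5_tab u v.
Proof.
have tab_lt : all (fun u => all (fun v => K5_tab u v < 6) (iota 0 5)) (iota 0 5) by [].
by rewrite /K5_colour /= inordK // (all_I5 (all_I5 tab_lt u)).
Qed.

Lemma K5_colour_ok : edge_coloring K5_colour /\ ~ has_rainbow_C3P2 K5_colour.
Proof.
have sym : all (fun u => all (fun v => K5_tab u v == K5_tab v u) (iota 0 5)) (iota 0 5) by [].
have onto : all (fun i => has (fun u => has (fun v => (u != v) && (K5_tab u v == i))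
  (iota 0 5)) (iota 0 5)) (iota 0 6) by [].
have norb : all (fun a => all (fun b => all (fun x => all (fun d => all (fun e =>
  ~~ (uniq [:: a; b; x; d; e] &&
      uniq [:: K5_tab a b; K5_tab b x; K5_tab x a; K5_tab d e]))
  (iota 0 5)) (iota 0 5)) (iota 0 5)) (iota 0 5)) (iota 0 5) by vm_compute.
split; first split.
- by move=> u v; apply: val_inj; rewrite !val_K5_colour; apply/eqP/(all_I5 (all_I5 sym u)).
- move=> i; move/allP/(_ i): onto; rewrite mem_iota ltn_ord => /(_ isT).
  case/hasP => u; rewrite mem_iota => hu /hasP [v]; rewrite mem_iota => hv /andP [huv /eqP e].
  exists (Ordinal hu), (Ordinal hv); split; first by [].
  by apply: val_inj; rewrite val_K5_colour.
- case=> a [b [x [d [e []]]]].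
  rewrite -!(map_inj_uniq val_inj) => hu hc.
  move/negP: (all_I5 (all_I5 (all_I5 (all_I5 (all_I5 norb a) b) x) d) e); apply.
  by rewrite -!val_K5_colour hu.
Qed.

Definition star n (o u v : 'I_n) : 'I_n := if u == o then v else if v == o then u else o.

Lemma star_off n (o u v : 'I_n) : u != o -> v != o -> star o u v = o.
Proof. by rewrite /star => /negbTE -> /negbTE ->. Qed.

Lemma star_coloring n (o u1 u2 : 'I_n) : u1 != o -> u2 != o -> u1 != u2 ->
  edge_coloring (star o).
Proof.
move=> h1 h2 h12; split.
  move=> u v; rewrite /star.
  by case: (eqVneq u o) => [->|//]; case: eqP => [->|].
move=> i; have [->|hi] := eqVneq i o; first by exists u1, u2; rewrite star_off.
by exists o, i; rewrite /star eqxx eq_sym.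
Qed.

(* Every copy of C_3 ∪ P_2 has two edges avoiding the centre o, as o lies on
   at most one of its components; both are coloured o. *)
Lemma star_no_rainbow n (o : 'I_n) : ~ has_rainbow_C3P2 (star o).
Proof.
have dup (p q r s : 'I_n) : [|| p == q, p == r, p == s, q == r, q == s | r == s] ->
  ~~ uniq [:: p; q; r; s].
  by rewrite /= !inE !negb_or; case/or4P => [->|->|->|/orP [->|/orP [->|->]]];
    rewrite ?andbF ?andFb.
case=> a [b [x [d [e [hu]]]]]; apply/negP; apply: dup.
move: hu; rewrite /= !inE !negb_or.
move=> /and5P [/and4P [hab hax had hae] /and3P [hbx hbd hbe] /andP [hxd hxe] hde _].
have [ode|/norP [hdo heo]] := boolP (o \in [:: d; e]).
  have off u : u != d -> u != e -> u != o by move: ode; rewrite !inE => /orP [] /eqP ->.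
  by rewrite (star_off (off a had hae) (off b hbd hbe))
    (star_off (off b hbd hbe) (off x hxd hxe)) eqxx.
rewrite orbF !(eq_sym o) in heo hdo; rewrite (star_off hdo heo).
have [hao|hao] := eqVneq a o.
  by rewrite hao in hab hax; rewrite (@star_off _ o b x) ?eqxx ?orbT // eq_sym.
have [hbo|hbo] := eqVneq b o.
  by rewrite hbo in hbx; rewrite (@star_off _ o x a) ?eqxx ?orbT // eq_sym.
by rewrite (@star_off _ o a b) ?eqxx ?orbT.
Qed.

Unset Implicit Arguments.

Theorem proposition6p2 (n : nat) (hn : 5 <= n) :
  AR_C3P2_is n (maxn n.+1 7).
Proof.
split.
  have [-> | n5] := eqVneq n 5; first by exists 6, K5_colour; split; last exact: K5_colour_ok.
  have lt0 : 0 < n by lia.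
  have lt1 : 1 < n by lia.
  have lt2 : 2 < n by lia.
  exists n, (star (Ordinal lt0)); split; first by lia.
  split; last exact: star_no_rainbow.
  by apply: (@star_coloring n (Ordinal lt0) (Ordinal lt1) (Ordinal lt2)).
(* all k colours lie inside the full vertex set, so k <= max(n, 6) *)
move=> k c [c_sym onto] no_rainbow.
have all_cols : cols c setT = setT.
  apply/setP => i; rewrite in_setT; have [u [v [huv <-]]] := onto i.
  exact: mem_cols (in_setT u) (in_setT v) huv.
have bound := cols_bound c_sym no_rainbow (cardsT 'I_n).
rewrite card_ord all_cols cardsT card_ord in bound.
by have := bound hn; lia.
Qed.
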